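(* Let $w\ge 2$ and let $(C_1,C_2)$ be an equitable $2$-partition of $J(n,w)$ whose quotient matrix $\begin{pmatrix} a & b\\ c& d\end{pmatrix}$ has $\lambda_2(n,w)=(w-2)(n-w-2)-2$ as an eigenvalue, with the cells ordered so that $b\ge c$. Then the quotient matrix equals $\begin{pmatrix} w(n-w)-b & b\\ 2n-2-b & w(n-w)-2n+2+b\end{pmatrix}$ for some $b\in\{n-1,n,\dots,2n-1\}$.
   Context: The Johnson graph $J(n,w)$ has as vertices the binary vectors of length $n$ with exactly $w$ ones; two vertices are adjacent iff they have exactly $w-1$ common ones; it is regular of degree $w(n-w)$. A $2$-partition $(C_1,C_2)$ of the vertex set into nonempty cells is equitable with quotient matrix $S=(s_{ij})$ if every vertex of $C_i$ has exactly $s_{ij}$ neighbours in $C_j$. The paper adopts the convention that cells are ordered so that $s_{12}\ge s_{21}$. *)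

From HB Require Import structures.
From mathcomp Require Import all_boot all_order all_algebra.
Set Implicit Arguments. Unset Strict Implicit. Unset Printing Implicit Defensive.
Import Order.TTheory GRing.Theory Num.Theory.

(* Johnson graph J(n,w): vertices = w-subsets of 'I_n (binary vectors of
   length n with exactly w ones, identified with their supports). *)
Definition JV (n w : nat) : {set {set 'I_n}} := [set A : {set 'I_n} | #|A| == w].

Definition Jadj (n w : nat) (A B : {set 'I_n}) : bool := #|A :&: B| == w.-1.

Definition equitable2 (n w : nat) (C1 C2 : {set {set 'I_n}}) (a b c d : nat) : Prop :=
  [/\ C1 != set0, C2 != set0, C1 :&: C2 = set0 & C1 :|: C2 = JV n w] /\
  (forall x, x \in C1 ->
         #|[set y in C1 | Jadj w x y]| = a /\ #|[set y in C2 | Jadj w x y]| = b) /\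
  (forall x, x \in C2 ->
         #|[set y in C1 | Jadj w x y]| = c /\ #|[set y in C2 | Jadj w x y]| = d).

Definition qmat (a b c d : nat) : 'M[rat]_2 :=
  \matrix_(i < 2, j < 2)
     (if i == 0 :> nat then (if j == 0 :> nat then a%:R else b%:R)
      else (if j == 0 :> nat then c%:R else d%:R))%R.

From HB Require Import structures.
From mathcomp Require Import all_boot all_order all_algebra zify ring lra.
Import Order.TTheory GRing.Theory Num.Theory.

(* Every row of the quotient matrix of an equitable partition sums to the
   degree k = w(n-w) of J(n,w) (the neighbours of x are the sets x - i + j,
   i in x, j outside x).  A 2x2 matrix with constant row sums k has
   eigenvalues k and a - c; as lambda_2 = k - 2(n-1) < k, we get
   a - c = lambda_2, i.e. b + c = 2n - 2, and c <= b forces n - 1 <= b. *)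

Section Swap.

Set Implicit Arguments.
Unset Strict Implicit.

Variable T : finType.
Implicit Types (x y : {set T}) (i j : T).

Definition swap x i j := j |: (x :\ i).

Lemma swap_diffl x i j : j \notin x -> swap x i j :\: x = [set j].
Proof.
move=> jx; apply/setP=> z; rewrite !inE.
case: (eqVneq z j) => [->|_]; rewrite ?(negbTE jx) //=.
by case: (z \in x); rewrite ?andbF.
Qed.

Lemma swap_diffr x i j : i \in x -> j \notin x -> x :\: swap x i j = [set i].
Proof.
move=> ix jx; apply/setP=> z; rewrite !inE.
case: (eqVneq z i) => [->|_] /=; last by case: (z \in x); rewrite ?orbT ?andbF.
by case: (eqVneq i j) => [ij|]; [rewrite -ij ix in jx | rewrite ix].
Qed.

Lemma setI_swap x i j : j \notin x -> x :&: swap x i j = x :\ i.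
Proof.
move=> jx; apply/setP=> z; rewrite !inE.
by case: (eqVneq z j) => [->|_] /=; rewrite ?(negbTE jx) ?andbF //;
  case: (z \in x); rewrite ?andbT ?andbF.
Qed.

Lemma card_swap x i j : i \in x -> j \notin x -> #|swap x i j| = #|x|.
Proof.
move=> ix jx; rewrite cardsU1 [#|x|](cardsD1 i) ix !inE.
by rewrite (negbTE jx) andbF.
Qed.

Lemma swap_of_diff x y i j :
  x :\: y = [set i] -> y :\: x = [set j] -> y = swap x i j.
Proof.
move=> dxy dyx; rewrite -[y](setID y x) setIC dyx setUC.
by rewrite -[x :&: y]set0U -(setDv x) -setDDr dxy.
Qed.

(* [0 < w] matters: for w = 0, [w.-1 = 0] makes [x] its own neighbour. *)
Lemma Johnson_nbhd_swap x w : #|x| = w -> 0 < w ->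
  [set y : {set T} | (#|y| == w) && (#|x :&: y| == w.-1)] =
  [set swap x p.1 p.2 | p in setX x (~: x)].
Proof.
move=> xw w_gt0; apply/setP=> y; rewrite !inE; apply/andP/imsetP.
- case=> /eqP yw /eqP xy.
  have /cards1P[i dxy] : #|x :\: y| == 1.
    by rewrite cardsD xy xw; apply/eqP; lia.
  have /cards1P[j dyx] : #|y :\: x| == 1.
    by rewrite cardsD setIC xy yw; apply/eqP; lia.
  have := set11 i; rewrite -dxy inE => /andP[_ ix].
  have := set11 j; rewrite -dyx inE => /andP[jx _].
  by exists (i, j); rewrite ?inE ?ix //; apply: swap_of_diff.
- case=> [[i j]]; rewrite !inE /= => /andP[ix jx] ->.
  rewrite card_swap ?setI_swap // xw; split=> //.
  by rewrite (cardsD1 i) ix in xw; rewrite -xw.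
Qed.

Lemma card_Johnson_nbhd x w : #|x| = w -> 0 < w ->
  #|[set y : {set T} | (#|y| == w) && (#|x :&: y| == w.-1)]| = w * (#|T| - w).
Proof.
move=> xw w_gt0; rewrite (Johnson_nbhd_swap xw w_gt0) card_in_imset.
  by rewrite cardsX -xw -(cardsC x) addKn.
move=> [i j] [i' j']; rewrite !inE /= => /andP[ix jx] /andP[ix' jx'] eq_swap.
congr pair; apply: set1_inj.
  by rewrite -(swap_diffr ix jx) -(swap_diffr ix' jx') eq_swap.
by rewrite -(swap_diffl i jx) -(swap_diffl i' jx') eq_swap.
Qed.

End Swap.

Lemma card_setIdU (T : finType) (A B : {set T}) (P : pred T) :
  A :&: B = set0 ->
  #|[set y in A :|: B | P y]| = #|[set y in A | P y]| + #|[set y in B | P y]|.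
Proof. by move=> AB0; rewrite !setIdE setIUl cardsU setIACA AB0 set0I cards0 subn0. Qed.

Lemma Johnson_degree n w x : x \in JV n w -> 0 < w ->
  #|[set y in JV n w | Jadj w x y]| = w * (n - w).
Proof.
rewrite inE => /eqP xw w_gt0; rewrite -[in n - w](card_ord n).
by rewrite -(card_Johnson_nbhd xw w_gt0); apply: eq_card => y; rewrite !inE.
Qed.

Section EquitablePartition.

Variables (n w : nat) (C1 C2 : {set {set 'I_n}}) (a b c d : nat).
Hypothesis eqC : @equitable2 n w C1 C2 a b c d.

Lemma equitable2_w_le_n : w <= n.
Proof.
have [[/set0Pn[x xC1] _ _ CU] _] := eqC.
have : x \in JV n w by rewrite -CU inE xC1.
by rewrite inE => /eqP <-; rewrite -[n in _ <= n](card_ord n) max_card.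
Qed.

Lemma equitable2_row_sums : 0 < w -> a + b = w * (n - w) /\ c + d = w * (n - w).
Proof.
move=> w_gt0; have [[/set0Pn[x1 x1C1] /set0Pn[x2 x2C2] C12 CU] [row1 row2]] := eqC.
have [<- <-] := row1 _ x1C1; have [<- <-] := row2 _ x2C2.
rewrite -!card_setIdU // CU !Johnson_degree // -CU inE ?x1C1 ?x2C2 ?orbT //.
Qed.

End EquitablePartition.

Local Open Scope ring_scope.

(* A left eigenvector for [l != k] is orthogonal to the right eigenvector
   (1, 1) of [k], hence of the form (t, -t). *)
Lemma eigenvalue_mx2_const_row_sum (F : fieldType) (M : 'M[F]_2) (k l : F) :
  M 0 0 + M 0 1 = k -> M 1 0 + M 1 1 = k -> eigenvalue M l -> l != k ->
  l = M 0 0 - M 1 0.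
Proof.
move=> row0 row1 /eigenvalueP[v vM v_neq0] l_neq_k.
have vM_entry j : v 0 0 * M 0 j + v 0 1 * M 1 j = l * v 0 j.
  have := congr1 (fun u : 'rV_2 => u 0 j) vM.
  rewrite !mxE !big_ord_recl big_ord0 addr0.
  by have -> : lift ord0 ord0 = 1 :> 'I_2 by apply/val_inj.
have v_sum0 : v 0 0 + v 0 1 = 0.
  have : (v 0 0 + v 0 1) * (k - l) = 0.
    rewrite mulrDl -{1}row0 -row1.
    transitivity (v 0 0 * M 0 0 + v 0 1 * M 1 0 - l * v 0 0
                  + (v 0 0 * M 0 1 + v 0 1 * M 1 1 - l * v 0 1)); first by ring.
    by rewrite !vM_entry !subrr addr0.
  by move/eqP; rewrite mulf_eq0 subr_eq0 [k == l]eq_sym (negbTE l_neq_k) orbF => /eqP.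
have v00_neq0 : v 0 0 != 0.
  apply: contraNneq v_neq0 => v00; apply/eqP/rowP => j; rewrite mxE.
  have v01 : v 0 1 = 0 by rewrite -v_sum0 v00 add0r.
  case: j => [[|[|j]] j_lt2] //; [rewrite -v00 | rewrite -v01];
    by congr (v 0 _); apply: val_inj.
have v01 : v 0 1 = - v 0 0 by apply/eqP; rewrite -addr_eq0 addrC v_sum0.
apply: (mulIf v00_neq0); rewrite -vM_entry v01; ring.
Qed.

Theorem proposition1 (n w : nat) (C1 C2 : {set {set 'I_n}}) (a b c d : nat) :
  (2 <= w)%N ->
  @equitable2 n w C1 C2 a b c d ->
  (c <= b)%N ->
  eigenvalue (qmat a b c d)
    ((((w%:R : rat) - 2) * ((n%:R : rat) - w%:R - 2) - 2)%R) ->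
  [/\ (n.-1 <= b <= (2 * n).-1)%N,
      (a%:Z = w%:Z * (n%:Z - w%:Z) - b%:Z)%R,
      (c%:Z = 2 * n%:Z - 2 - b%:Z)%R &
      (d%:Z = w%:Z * (n%:Z - w%:Z) - 2 * n%:Z + 2 + b%:Z)%R].
Proof.
move=> w_ge2 eqC c_le_b eig.
have w_le_n := equitable2_w_le_n eqC.
have [ab cd] := equitable2_row_sums eqC (ltnW w_ge2).
set k := (w * (n - w))%N in ab cd.
set lam := (_ - 2) in eig.
have lamE : lam = k%:R - (2 * n.-1)%:R.
  rewrite /lam /k natrM natrB // mulnC natrM -subn1 natrB; last by lia.
  ring.
have lam_neq_k : lam != k%:R.
  rewrite lamE -subr_eq0 addrAC subrr add0r oppr_eq0 pnatr_eq0; lia.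
have ac : lam = a%:R - c%:R.
  by rewrite (eigenvalue_mx2_const_row_sum _ _ eig lam_neq_k) !mxE // -natrD ?ab ?cd.
have {ac lamE} acE : (a + 2 * n.-1 = c + k)%N.
  by apply/eqP; rewrite -(eqr_nat rat) !natrD; apply/eqP; lra.
rewrite subzn // -PoszM -/k; split; lia.
Qed.
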